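(* Let $S$ be a set of pairwise disjoint line segments in the plane in general position, $H\subset S$, and $s_1,s_2\in S\setminus H$ distinct. There is an unbounded Voronoi edge in $\mathcal{V}_{|H|+1}(S)$ separating the regions $V_{|H|+1}(H\cup\{s_1\},S)$ and $V_{|H|+1}(H\cup\{s_2\},S)$ if and only if there exists a supporting halfplane of $s_1,s_2$ and $H$.
   Context: Distances are Euclidean: $d(x,s)=\min_{q\in s}d(x,q)$. For $|H'|=k$, $V_k(H',S)=\{x : d(x,s)<d(x,t)\ \forall s\in H',\ \forall t\in S\setminus H'\}$, and $\mathcal{V}_k(S)$ is the partition of the plane into these regions. A supporting halfplane of $s_1,s_2\notin H$ and $H$ is an open halfplane $h$ whose boundary line passes through at least one endpoint of $s_1$ and at least one endpoint of $s_2$, such that $h$ intersects all segments of $H$ and no segment of $S\setminus H$. General position: no more than three segments touch the same circle and no more than two endpoints are collinear. *)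

From Stdlib Require Import Reals Lra List Classical ClassicalEpsilon.
Open Scope R_scope.

Definition point : Type := (R * R)%type.

Definition eucl (x y : point) : R :=
  sqrt ((fst x - fst y) ^ 2 + (snd x - snd y) ^ 2).

Record segment : Type := mkSeg { sa : point ; sb : point }.

Definition on_seg (s : segment) (q : point) : Prop :=
  exists t : R, 0 <= t <= 1 /\
    q = (fst (sa s) + t * (fst (sb s) - fst (sa s)),
         snd (sa s) + t * (snd (sb s) - snd (sa s))).

Definition is_endpoint (s : segment) (q : point) : Prop :=
  q = sa s \/ q = sb s.

Definition is_min_dist (x : point) (s : segment) (r : R) : Prop :=
  (exists q, on_seg s q /\ eucl x q = r) /\
  (forall q, on_seg s q -> r <= eucl x q).

Definition dist (x : point) (s : segment) : R :=
  epsilon (inhabits 0) (fun r => is_min_dist x s r).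

(* Order-k Voronoi region V_k(H',S) (k = |H'|), with H' given as a predicate. *)
Definition voronoi_region (H' : segment -> Prop) (S : list segment) (x : point) : Prop :=
  forall s t, H' s -> In t S -> ~ H' t -> dist x s < dist x t.

Definition closure (A : point -> Prop) (x : point) : Prop :=
  forall eps, 0 < eps -> exists y, A y /\ eucl x y < eps.

Definition unbounded (A : point -> Prop) : Prop :=
  forall M : R, exists x, A x /\ M < eucl x (0, 0).

Definition add_seg (H : list segment) (s : segment) : segment -> Prop :=
  fun t => In t H \/ t = s.

(* There is an unbounded Voronoi edge separating V(H∪{s1},S) and V(H∪{s2},S):
   the common boundary (intersection of the closures) of the two regions is
   unbounded. *)
Definition unbounded_voronoi_edge (S H : list segment) (s1 s2 : segment) : Prop :=
  unbounded (fun x => closure (voronoi_region (add_seg H s1) S) x /\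
                      closure (voronoi_region (add_seg H s2) S) x).

Definition in_open_halfplane (a b c : R) (q : point) : Prop :=
  a * fst q + b * snd q > c.

Definition on_line (a b c : R) (q : point) : Prop :=
  a * fst q + b * snd q = c.

Definition supporting_halfplane (S H : list segment) (s1 s2 : segment) (a b c : R) : Prop :=
  (a <> 0 \/ b <> 0) /\
  (exists e1, is_endpoint s1 e1 /\ on_line a b c e1) /\
  (exists e2, is_endpoint s2 e2 /\ on_line a b c e2) /\
  (forall h, In h H -> exists q, on_seg h q /\ in_open_halfplane a b c q) /\
  (forall t, In t S -> ~ In t H -> forall q, on_seg t q -> ~ in_open_halfplane a b c q).

Definition pairwise_disjoint (S : list segment) : Prop :=
  forall s t, In s S -> In t S -> s <> t -> forall q, on_seg s q -> ~ on_seg t q.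

Definition collinear (p q r : point) : Prop :=
  (fst q - fst p) * (snd r - snd p) - (snd q - snd p) * (fst r - fst p) = 0.

Definition touches_circle (s : segment) (c : point) (r : R) : Prop :=
  dist c s = r.

Definition general_position (S : list segment) : Prop :=
  (forall (c : point) (r : R), 0 < r ->
     forall s1 s2 s3 s4, In s1 S -> In s2 S -> In s3 S -> In s4 S ->
       s1 <> s2 -> s1 <> s3 -> s1 <> s4 -> s2 <> s3 -> s2 <> s4 -> s3 <> s4 ->
       ~ (touches_circle s1 c r /\ touches_circle s2 c r /\
          touches_circle s3 c r /\ touches_circle s4 c r)) /\
  (forall p q r, (exists s, In s S /\ is_endpoint s p) ->
                 (exists s, In s S /\ is_endpoint s q) ->
                 (exists s, In s S /\ is_endpoint s r) ->
                 p <> q -> p <> r -> q <> r -> ~ collinear p q r).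

From Pilot Require Import Defs.
From Stdlib Require Import Reals List Lra Psatz Classical ClassicalEpsilon Rgeom.
Open Scope R_scope.

(* A point x far out on the common edge is the centre of a disk that touches s1,
   s2 and every segment of H, and whose interior misses every segment of
   S \ H.  As |x| grows, the disk flattens into a halfplane bounded by the line
   through its contact endpoints u on s1 and w on s2; since S is finite, nonzero
   orientations of endpoint triples are bounded away from zero, so for |x| large
   enough the sides of that line separate H from S \ H exactly, general position
   excluding endpoints on the line.
   Conversely, given a supporting halfplane through u and w, move far from the
   line in the direction of its normal: there u and w are the nearest points of
   s1 and s2, every segment of H is nearer and every other segment is farther,
   so the bisector of u w is an unbounded common boundary of the two regions. *)

Definition vadd (p q : point) : point := (fst p + fst q, snd p + snd q).
Definition vsub (p q : point) : point := (fst p - fst q, snd p - snd q).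
Definition vscale (k : R) (p : point) : point := (k * fst p, k * snd p).
Definition dot (p q : point) : R := fst p * fst q + snd p * snd q.
Definition cross (p q : point) : R := fst p * snd q - snd p * fst q.
Definition norm2 (p : point) : R := fst p ^ 2 + snd p ^ 2.
Definition norm1 (p : point) : R := Rabs (fst p) + Rabs (snd p).

Ltac unfold_vec := unfold vadd, vsub, vscale, dot, cross, norm2, norm1 in *; cbn [fst snd] in *.

Lemma norm2_nonneg p : 0 <= norm2 p.
Proof. unfold_vec. nra. Qed.

Lemma norm2_pos a b : a <> 0 \/ b <> 0 -> 0 < norm2 (a, b).
Proof.
  intros Hab. unfold_vec. pose proof (pow2_ge_0 a). pose proof (pow2_ge_0 b).
  destruct Hab as [Hab | Hab]; apply Rsqr_pos_lt in Hab; unfold Rsqr in Hab; nra.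
Qed.

Lemma lagrange_identity n z : norm2 n * norm2 z = dot n z ^ 2 + cross n z ^ 2.
Proof. unfold_vec. ring. Qed.

Lemma cross_mul_norm2 v p x :
  cross v p * norm2 x = dot x p * cross v x + cross x p * dot v x.
Proof. unfold_vec. ring. Qed.

Lemma norm1_sqr_le p : norm1 p ^ 2 <= 2 * norm2 p.
Proof.
  unfold_vec. pose proof (pow2_abs (fst p)). pose proof (pow2_abs (snd p)).
  pose proof (pow2_ge_0 (Rabs (fst p) - Rabs (snd p))). nra.
Qed.

Lemma norm1_nonneg p : 0 <= norm1 p.
Proof. unfold_vec. pose proof (Rabs_pos (fst p)). pose proof (Rabs_pos (snd p)). lra. Qed.

Lemma cross_abs_le p x M :
  Rabs (fst p) <= M -> Rabs (snd p) <= M -> Rabs (cross p x) <= M * norm1 x.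
Proof.
  intros H1 H2. unfold cross, norm1, Rminus.
  eapply Rle_trans; [apply Rabs_triang|]. rewrite Rabs_Ropp, !Rabs_mult.
  pose proof (Rabs_pos (fst x)). pose proof (Rabs_pos (snd x)).
  nra.
Qed.

Lemma eucl_norm2 x y : eucl x y = sqrt (norm2 (vsub x y)).
Proof. reflexivity. Qed.

Lemma eucl_sym x y : eucl x y = eucl y x.
Proof. rewrite !eucl_norm2. f_equal. unfold_vec. ring. Qed.

Lemma eucl_triangle x y z : eucl x z <= eucl x y + eucl y z.
Proof.
  pose proof (triangle (fst x) (snd x) (fst z) (snd z) (fst y) (snd y)) as T.
  unfold dist_euc, Rsqr in T. rewrite !eucl_norm2. unfold_vec.
  replace ((fst x - fst z) ^ 2 + (snd x - snd z) ^ 2)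
    with ((fst x - fst z) * (fst x - fst z) + (snd x - snd z) * (snd x - snd z)) by ring.
  replace ((fst x - fst y) ^ 2 + (snd x - snd y) ^ 2)
    with ((fst x - fst y) * (fst x - fst y) + (snd x - snd y) * (snd x - snd y)) by ring.
  replace ((fst y - fst z) ^ 2 + (snd y - snd z) ^ 2)
    with ((fst y - fst z) * (fst y - fst z) + (snd y - snd z) * (snd y - snd z)) by ring.
  exact T.
Qed.

Lemma on_seg_endpoint s e : is_endpoint s e -> on_seg s e.
Proof.
  intros [-> | ->]; [exists 0 | exists 1]; split; try lra;
    destruct (sa s), (sb s); simpl; f_equal; ring.
Qed.

Lemma seg_dot_le s n m q :
  on_seg s q -> dot n (sa s) <= m -> dot n (sb s) <= m -> dot n q <= m.
Proof. intros [t [Ht ->]]. unfold_vec. nra. Qed.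

Lemma seg_dot_max s n q : on_seg s q -> exists e, is_endpoint s e /\ dot n q <= dot n e.
Proof.
  intros Hq. destruct (Rle_dec (dot n (sb s)) (dot n (sa s))).
  - exists (sa s). split; [left; reflexivity|]. apply (seg_dot_le s); auto; lra.
  - exists (sb s). split; [right; reflexivity|]. apply (seg_dot_le s); auto; lra.
Qed.

(* The squared distance from [x] to [a + t (b - a)] is a quadratic in [t];
   the clamped vertex [p / D] of that parabola minimises it over [0, 1]. *)
Lemma segment_nearest_point x s :
  exists q, on_seg s q /\ forall q', on_seg s q' -> norm2 (vsub x q) <= norm2 (vsub x q').
Proof.
  destruct s as [[a1 a2] [b1 b2]]; destruct x as [x1 x2]; unfold on_seg; cbn [sa sb fst snd].
  set (D := (b1 - a1) ^ 2 + (b2 - a2) ^ 2).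
  set (p := (x1 - a1) * (b1 - a1) + (x2 - a2) * (b2 - a2)).
  assert (HD : 0 <= D) by (unfold D; pose proof (pow2_ge_0 (b1 - a1)); pose proof (pow2_ge_0 (b2 - a2)); lra).
  assert (key : forall t u,
    norm2 (vsub (x1, x2) (a1 + t * (b1 - a1), a2 + t * (b2 - a2))) -
    norm2 (vsub (x1, x2) (a1 + u * (b1 - a1), a2 + u * (b2 - a2))) = (t - u) * ((t + u) * D - 2 * p)).
  { intros. unfold D, p; unfold_vec; ring. }
  clearbody D p.
  assert (Hvertex : exists u, 0 <= u <= 1 /\
            forall t, 0 <= t <= 1 -> 0 <= (t - u) * ((t + u) * D - 2 * p)).
  { clear key. destruct (Rle_lt_dec p 0) as [Hp|Hp].
    { exists 0; split; [lra|]. intros t Ht. apply Rmult_le_pos; nra. }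
    destruct (Rle_lt_dec D p) as [Hq|Hq].
    { exists 1; split; [lra|]. intros t Ht.
      replace ((t - 1) * ((t + 1) * D - 2 * p)) with ((1 - t) * (2 * p - (t + 1) * D)) by ring.
      apply Rmult_le_pos; nra. }
    exists (p / D). split.
    - split; [apply Rle_mult_inv_pos; lra|]. apply (Rmult_le_reg_r D); [lra|]. field_simplify; lra.
    - intros t Ht. replace ((t - p / D) * ((t + p / D) * D - 2 * p)) with (D * (t - p / D) ^ 2)
        by (field; lra). apply Rmult_le_pos; [lra|apply pow2_ge_0]. }
  destruct Hvertex as [u [Hu Hmin]].
  exists (a1 + u * (b1 - a1), a2 + u * (b2 - a2)). split; [exists u; auto|].
  intros q' [t [Ht ->]]. pose proof (key t u). pose proof (Hmin t Ht). lra.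
Qed.

Lemma dist_spec x s : is_min_dist x s (Defs.dist x s).
Proof.
  unfold Defs.dist. apply epsilon_spec.
  destruct (segment_nearest_point x s) as [q [Hq Hm]].
  exists (eucl x q). split; [exists q; auto|].
  intros q' Hq'. apply sqrt_le_1_alt, Hm, Hq'.
Qed.

Lemma dist_le x s q : on_seg s q -> Defs.dist x s <= eucl x q.
Proof. intros Hq. apply (proj2 (dist_spec x s)), Hq. Qed.

Lemma dist_attained x s : exists q, on_seg s q /\ Defs.dist x s = eucl x q.
Proof. destruct (dist_spec x s) as [[q [Hq E]] _]. exists q; auto. Qed.

Lemma dist_nonneg x s : 0 <= Defs.dist x s.
Proof. destruct (dist_attained x s) as [q [_ ->]]. apply sqrt_pos. Qed.

Lemma dist_lipschitz x y s : Defs.dist y s <= Defs.dist x s + eucl x y.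
Proof.
  destruct (dist_attained x s) as [q [Hq ->]].
  pose proof (dist_le y s q Hq). pose proof (eucl_triangle y x q).
  rewrite (eucl_sym y x) in *. lra.
Qed.

Lemma dist_eq_nearest x s e :
  on_seg s e -> (forall q, on_seg s q -> norm2 (vsub x e) <= norm2 (vsub x q)) ->
  Defs.dist x s = eucl x e.
Proof.
  intros He Hm. destruct (dist_spec x s) as [[q [Hq E]] L].
  apply Rle_antisym; [apply L, He|]. rewrite <- E. apply sqrt_le_1_alt, Hm, Hq.
Qed.

Lemma dist_eq_endpoint y s e :
  is_endpoint s e -> (forall o, is_endpoint s o -> dot (vsub y e) (vsub o e) <= 0) ->
  Defs.dist y s = eucl y e.
Proof.
  intros He Hobt. apply dist_eq_nearest; [apply on_seg_endpoint, He|].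
  intros q Hq.
  assert (Hq' : dot (vsub y e) q <= dot (vsub y e) e).
  { apply (seg_dot_le s); [exact Hq | |];
      [pose proof (Hobt (sa s) (or_introl eq_refl)) | pose proof (Hobt (sb s) (or_intror eq_refl))];
      unfold_vec; lra. }
  assert (E : norm2 (vsub y q) = norm2 (vsub y e) - 2 * (dot (vsub y e) q - dot (vsub y e) e)
                                  + norm2 (vsub q e)) by (unfold_vec; ring).
  pose proof (norm2_nonneg (vsub q e)). lra.
Qed.

Lemma closure_voronoi_le (H' : segment -> Prop) S x s t :
  Defs.closure (voronoi_region H' S) x -> H' s -> In t S -> ~ H' t ->
  Defs.dist x s <= Defs.dist x t.
Proof.
  intros Hc Hs Ht Hnt. apply Rnot_lt_le. intros Hlt.
  destruct (Hc ((Defs.dist x s - Defs.dist x t) / 2)) as [y [Hy Hxy]]; [lra|].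
  pose proof (Hy s t Hs Ht Hnt). pose proof (dist_lipschitz x y t).
  pose proof (dist_lipschitz y x s). rewrite (eucl_sym y x) in *. lra.
Qed.

Definition eventually (P : R -> Prop) : Prop := exists L0, forall L, L0 <= L -> P L.

Lemma eventually_and P Q : eventually P -> eventually Q -> eventually (fun L => P L /\ Q L).
Proof.
  intros [L1 H1] [L2 H2]. exists (Rmax L1 L2). intros L HL.
  split; [apply H1 | apply H2]; eapply Rle_trans; eauto; [apply Rmax_l | apply Rmax_r].
Qed.

Lemma eventually_forall_in {A} (l : list A) (P : A -> R -> Prop) :
  (forall a, In a l -> eventually (P a)) -> eventually (fun L => forall a, In a l -> P a L).
Proof.
  induction l as [|x l IH]; intros Hall.
  - exists 0. intros L _ a [].
  - destruct (eventually_and _ _ (Hall x (or_introl eq_refl))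
                (IH (fun a Ha => Hall a (or_intror Ha)))) as [L0 HL0].
    exists L0. intros L HL. destruct (HL0 L HL) as [Hx Hl]. intros a [<- | Ha]; auto.
Qed.

Lemma eventually_linear_ge N alpha beta : 0 < N -> eventually (fun L => beta <= alpha + L * N).
Proof.
  intros HN. exists ((beta - alpha) / N). intros L HL.
  apply (Rmult_le_compat_r N) in HL; [|lra].
  replace ((beta - alpha) / N * N) with (beta - alpha) in HL by (field; lra). lra.
Qed.

Lemma finite_pos_lower_bound {A} (l : list A) (f : A -> R) :
  exists d, 0 < d /\ forall a, In a l -> 0 < f a -> d <= f a.
Proof.
  induction l as [|x l [d [Hd Hm]]].
  - exists 1. split; [lra | intros a []].
  - destruct (Rlt_le_dec 0 (f x)) as [Hx|Hx].
    + exists (Rmin d (f x)). split; [apply Rmin_pos; auto|].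
      intros a [<- | Ha] Hfa; [apply Rmin_r|].
      eapply Rle_trans; [apply Rmin_l | auto].
    + exists d. split; auto. intros a [<- | Ha] Hfa; [lra | auto].
Qed.

Lemma Rabs_le_bounds x B : Rabs x <= B -> - B <= x <= B.
Proof. intros H. pose proof (Rle_abs x). pose proof (Rle_abs (- x)). rewrite Rabs_Ropp in *. lra. Qed.

Definition bounded_by (B : R) (q : point) : Prop := Rabs (fst q) <= B /\ Rabs (snd q) <= B.

Lemma segments_bounded (S : list segment) :
  exists B, 0 <= B /\ forall s q, In s S -> on_seg s q -> bounded_by B q.
Proof.
  assert (Hend : exists B, 0 <= B /\ forall s, In s S -> bounded_by B (sa s) /\ bounded_by B (sb s)).
  { induction S as [|s S [B [HB0 HB]]]; [exists 0; split; [lra | intros s []]|].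
    set (m := Rabs (fst (sa s)) + Rabs (snd (sa s)) + Rabs (fst (sb s)) + Rabs (snd (sb s))).
    pose proof (Rabs_pos (fst (sa s))). pose proof (Rabs_pos (snd (sa s))).
    pose proof (Rabs_pos (fst (sb s))). pose proof (Rabs_pos (snd (sb s))).
    exists (B + m). split; [unfold m; lra|]. unfold bounded_by.
    intros t [<- | Ht]; [unfold m; lra|].
    destruct (HB t Ht) as [[? ?] [? ?]]. unfold m; lra. }
  destruct Hend as [B [HB0 HB]]. exists B. split; auto.
  intros s q Hs Hq. destruct (HB s Hs) as [[Ha1 Ha2] [Hb1 Hb2]].
  apply Rabs_le_bounds in Ha1, Ha2, Hb1, Hb2.
  assert (Hcoord : forall n, dot n (sa s) <= B -> dot n (sb s) <= B -> dot n q <= B)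
    by (intros; apply (seg_dot_le s); auto).
  pose proof (Hcoord (1, 0)). pose proof (Hcoord (-1, 0)).
  pose proof (Hcoord (0, 1)). pose proof (Hcoord (0, -1)).
  unfold bounded_by; unfold_vec. split; apply Rabs_le; split; lra.
Qed.

Definition endpoints (S : list segment) : list point := flat_map (fun s => sa s :: sb s :: nil) S.

Lemma in_endpoints S s p : In s S -> is_endpoint s p -> In p (endpoints S).
Proof.
  intros Hs Hp. apply in_flat_map. exists s. split; auto.
  destruct Hp as [-> | ->]; simpl; auto.
Qed.

(* There are finitely many endpoint triples, so nonzero orientations stay away from zero. *)
Lemma cross_lower_bound (S : list segment) :
  exists d, 0 < d /\ forall s1 s2 s3 p1 p2 p3, In s1 S -> In s2 S -> In s3 S ->
    is_endpoint s1 p1 -> is_endpoint s2 p2 -> is_endpoint s3 p3 ->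
    cross (vsub p2 p1) (vsub p3 p1) <> 0 -> d <= Rabs (cross (vsub p2 p1) (vsub p3 p1)).
Proof.
  set (E := endpoints S).
  destruct (finite_pos_lower_bound (list_prod (list_prod E E) E)
             (fun t => Rabs (cross (vsub (snd (fst t)) (fst (fst t))) (vsub (snd t) (fst (fst t))))))
    as [d [Hd Hm]].
  exists d. split; auto. intros s1 s2 s3 p1 p2 p3 H1 H2 H3 E1 E2 E3 Hnz.
  apply (Hm ((p1, p2), p3)); [|apply Rabs_pos_lt, Hnz].
  repeat apply in_prod;
    [apply (in_endpoints S s1) | apply (in_endpoints S s2) | apply (in_endpoints S s3)]; auto.
Qed.

Lemma edge_point_empty_disk S H s1 s2 x :
  In s1 S -> ~ In s1 H -> In s2 S -> ~ In s2 H -> s1 <> s2 ->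
  Defs.closure (voronoi_region (add_seg H s1) S) x ->
  Defs.closure (voronoi_region (add_seg H s2) S) x ->
  exists r, 0 <= r /\
    (forall t q, In t S -> ~ In t H -> on_seg t q -> r <= eucl x q) /\
    (forall h, In h H \/ h = s1 \/ h = s2 -> exists q, on_seg h q /\ eucl x q <= r).
Proof.
  intros Hs1 Hn1 Hs2 Hn2 Hne C1 C2. unfold add_seg in *.
  assert (Hs21 : Defs.dist x s2 <= Defs.dist x s1)
    by (apply (closure_voronoi_le _ S x s2 s1 C2); auto; intros [? | ?]; auto).
  exists (Defs.dist x s1). split; [apply dist_nonneg | split].
  - intros t q Ht Hnt Hq. eapply Rle_trans; [|apply dist_le, Hq].
    destruct (classic (t = s1)) as [-> | Hts]; [lra|].
    apply (closure_voronoi_le _ S x s1 t C1); auto. intros [? | ?]; auto.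
  - intros h Hh. destruct (dist_attained x h) as [q [Hq E]]. exists q. split; auto.
    rewrite <- E. destruct Hh as [Hh | [-> | ->]]; [| lra | auto].
    eapply Rle_trans; [|exact Hs21].
    apply (closure_voronoi_le _ S x h s2 C1); auto. intros [? | ?]; auto.
Qed.

Lemma norm2_le_of_bounded B q : bounded_by B q -> norm2 q <= 2 * B ^ 2.
Proof.
  intros [H1 H2]. apply Rabs_le_bounds in H1, H2. unfold_vec. nra.
Qed.

Lemma norm2_vsub x q : norm2 (vsub x q) = norm2 x - 2 * dot x q + norm2 q.
Proof. unfold_vec. ring. Qed.

Lemma dot_le_of_outside_disk x q r B :
  0 <= r -> bounded_by B q -> r <= eucl x q -> 2 * dot x q <= norm2 x - r ^ 2 + 2 * B ^ 2.
Proof.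
  intros Hr HB Hd. pose proof (norm2_le_of_bounded B q HB).
  assert (r ^ 2 <= norm2 (vsub x q)).
  { rewrite <- (sqrt_sqrt (norm2 (vsub x q))) by apply norm2_nonneg.
    rewrite eucl_norm2 in Hd. nra. }
  rewrite norm2_vsub in *. lra.
Qed.

Lemma dot_ge_of_inside_disk x q r : eucl x q <= r -> norm2 x - r ^ 2 <= 2 * dot x q.
Proof.
  intros Hd. pose proof (norm2_nonneg q). pose proof (sqrt_pos (norm2 (vsub x q))).
  assert (norm2 (vsub x q) <= r ^ 2).
  { rewrite <- (sqrt_sqrt (norm2 (vsub x q))) by apply norm2_nonneg.
    rewrite eucl_norm2 in Hd. nra. }
  rewrite norm2_vsub in *. lra.
Qed.

Definition sgn (z : R) : R := if Rle_dec 0 z then 1 else -1.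

Lemma sgn_mul_self z : sgn z * z = Rabs z.
Proof.
  unfold sgn. destruct (Rle_dec 0 z); [rewrite Rabs_pos_eq | rewrite Rabs_left1]; lra.
Qed.

Lemma sgn_neq0 z : sgn z <> 0.
Proof. unfold sgn. destruct (Rle_dec 0 z); lra. Qed.

Lemma Rabs_sgn z : Rabs (sgn z) = 1.
Proof.
  unfold sgn. destruct (Rle_dec 0 z); [apply Rabs_R1 | rewrite Rabs_left1; lra].
Qed.

Lemma bounded_by_vsub B p q : bounded_by B p -> bounded_by B q -> bounded_by (2 * B) (vsub p q).
Proof.
  intros [P1 P2] [Q1 Q2]. apply Rabs_le_bounds in P1, P2, Q1, Q2.
  unfold bounded_by; unfold_vec. split; apply Rabs_le; lra.
Qed.

(* Writing [psi |x|^2] with [cross_mul_norm2], the term [dot v x] is small because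
   [u] and [w] lie in the same slab orthogonal to [x], and [dot x (p - u)] is
   bounded on the relevant side of that slab. *)
Lemma cross_sign_estimate x u w p Phi K B :
  bounded_by B u -> bounded_by B w -> bounded_by B p ->
  Phi <= 2 * dot x u <= Phi + K -> Phi <= 2 * dot x w <= Phi + K ->
  let v := vsub w u in
  let psi := sgn (cross v x) * cross v (vsub p u) in
  (2 * dot x p <= Phi + K -> psi * norm2 x <= 2 * K * B * norm1 x) /\
  (Phi <= 2 * dot x p -> - (2 * K * B * norm1 x) <= psi * norm2 x).
Proof.
  intros Bu Bw Bp Hu Hw v psi.
  set (G := dot x (vsub p u)). set (A := dot v x).
  set (T := sgn (cross v x) * cross x (vsub p u) * A).
  assert (Hid : psi * norm2 x = Rabs (cross v x) * G + T).
  { unfold psi, T, G, A. rewrite Rmult_assoc, cross_mul_norm2, <- sgn_mul_self. ring. }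
  assert (HB : 0 <= B) by (destruct Bu as [H1 _]; pose proof (Rabs_pos (fst u)); lra).
  assert (HA : Rabs A <= K / 2) by (apply Rabs_le; unfold A, v; unfold_vec; lra).
  assert (Hv : Rabs (cross v x) <= 2 * B * norm1 x)
    by (destruct (bounded_by_vsub B w u Bw Bu); apply cross_abs_le; auto).
  assert (Hpx : Rabs (cross x (vsub p u)) <= 2 * B * norm1 x).
  { replace (cross x (vsub p u)) with (- cross (vsub p u) x) by (unfold_vec; ring).
    rewrite Rabs_Ropp. destruct (bounded_by_vsub B p u Bp Bu). apply cross_abs_le; auto. }
  assert (HT : Rabs T <= K * B * norm1 x).
  { unfold T. rewrite !Rabs_mult, Rabs_sgn, Rmult_1_l.
    replace (K * B * norm1 x) with (2 * B * norm1 x * (K / 2)) by field.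
    apply Rmult_le_compat; auto using Rabs_pos. }
  pose proof (Rabs_pos (cross v x)). apply Rabs_le_bounds in HT.
  split; intros Hp; rewrite Hid.
  - assert (G <= K / 2) by (unfold G; unfold_vec; lra).
    assert (Rabs (cross v x) * G <= 2 * B * norm1 x * (K / 2)).
    { apply (Rle_trans _ (Rabs (cross v x) * (K / 2))); [apply Rmult_le_compat_l; lra|].
      apply Rmult_le_compat_r; lra. }
    lra.
  - assert (- (K / 2) <= G) by (unfold G; unfold_vec; lra).
    assert (- (2 * B * norm1 x * (K / 2)) <= Rabs (cross v x) * G).
    { apply (Rle_trans _ (Rabs (cross v x) * - (K / 2))); [|apply Rmult_le_compat_l; lra].
      rewrite <- !Ropp_mult_distr_r. apply Ropp_le_contravar, Rmult_le_compat_r; lra. }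
    lra.
Qed.

Lemma norm2_dominates_norm1 d C : 0 < d ->
  exists M, forall x, M < eucl x (0, 0) -> C * norm1 x < d * norm2 x.
Proof.
  intros Hd. set (M := 2 * C ^ 2 / d ^ 2 + 1).
  assert (HM : 1 <= M) by (unfold M; assert (0 <= 2 * C ^ 2 / d ^ 2) by
    (apply Rle_mult_inv_pos; [nra | apply pow_lt; lra]); lra).
  exists M. intros x Hx. rewrite eucl_norm2 in Hx.
  replace (norm2 (vsub x (0, 0))) with (norm2 x) in Hx by (unfold_vec; ring).
  pose proof (norm2_nonneg x). pose proof (norm1_sqr_le x). pose proof (norm1_nonneg x).
  set (X := norm2 x) in *.
  assert (HXM : M * M < X) by (rewrite <- (sqrt_sqrt X) by lra; apply Rmult_le_0_lt_compat; lra).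
  apply Rnot_le_lt. intros Hle.
  assert ((d * X) ^ 2 <= (C * norm1 x) ^ 2) by (apply pow_incr; split; [nra | lra]).
  assert (C ^ 2 * norm1 x ^ 2 <= C ^ 2 * (2 * X)) by (apply Rmult_le_compat_l; nra).
  assert (d ^ 2 * X ^ 2 <= 2 * C ^ 2 * X) by nra.
  assert (d ^ 2 * X <= 2 * C ^ 2) by nra.
  assert (X <= 2 * C ^ 2 / d ^ 2).
  { apply (Rmult_le_reg_l (d ^ 2)); [nra|]. unfold Rdiv. field_simplify; lra. }
  unfold M in *. nra.
Qed.

Lemma nonpos_of_dominated psi X S1 C d :
  0 <= X -> C * S1 < d * X -> psi * X <= C * S1 -> (psi <> 0 -> d <= Rabs psi) -> psi <= 0.
Proof.
  intros HX Hdom Hle Hgap. apply Rnot_lt_le. intros Hpos.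
  specialize (Hgap ltac:(lra)). rewrite Rabs_pos_eq in Hgap by lra. nra.
Qed.

Lemma supporting_halfplane_of_signs S H s1 s2 u w sg :
  is_endpoint s1 u -> is_endpoint s2 w -> u <> w -> sg <> 0 ->
  (forall h, In h H -> exists e, is_endpoint h e /\ 0 < sg * cross (vsub w u) (vsub e u)) ->
  (forall t e, In t S -> ~ In t H -> is_endpoint t e -> sg * cross (vsub w u) (vsub e u) <= 0) ->
  exists a b c, supporting_halfplane S H s1 s2 a b c.
Proof.
  intros Hu Hw Huw Hsg Hin Hout. set (v := vsub w u) in *.
  set (a := - sg * snd v). set (b := sg * fst v). set (c := a * fst u + b * snd u).
  assert (Hside : forall q, a * fst q + b * snd q - c = sg * cross v (vsub q u))
    by (intros; unfold c, a, b; unfold_vec; ring).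
  exists a, b, c. split; [|split; [|split; [|split]]].
  - destruct (Req_dec (fst v) 0) as [Hv1 | Hv1]; [left | right; unfold b; nra].
    unfold a. intros Ha. apply Huw.
    assert (snd v = 0) by nra. unfold v, vsub in *; cbn [fst snd] in *.
    apply injective_projections; lra.
  - exists u. split; auto. unfold on_line, c. ring.
  - exists w. split; auto. unfold on_line.
    pose proof (Hside w) as E. replace (cross v (vsub w u)) with 0 in E by (unfold v; unfold_vec; ring).
    lra.
  - intros h Hh. destruct (Hin h Hh) as [e [He Hpos]]. exists e.
    split; [apply on_seg_endpoint, He|]. unfold in_open_halfplane. pose proof (Hside e). lra.
  - intros t Ht Hnt q Hq. unfold in_open_halfplane. apply Rle_not_lt.
    assert (Hq' : dot (a, b) q <= c).
    { apply (seg_dot_le t); auto; unfold dot; cbn [fst snd];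
        [pose proof (Hout t (sa t) Ht Hnt (or_introl eq_refl)) |
         pose proof (Hout t (sb t) Ht Hnt (or_intror eq_refl))];
        pose proof (Hside (sa t)); pose proof (Hside (sb t)); lra. }
    unfold dot in Hq'. cbn [fst snd] in Hq'. lra.
Qed.

Lemma endpoints_neq_of_disjoint S s t p q :
  pairwise_disjoint S -> In s S -> In t S -> s <> t -> is_endpoint s p -> is_endpoint t q -> p <> q.
Proof.
  intros Hdis Hs Ht Hst Hp Hq ->.
  exact (Hdis s t Hs Ht Hst q (on_seg_endpoint _ _ Hp) (on_seg_endpoint _ _ Hq)).
Qed.

Lemma cross_neq0_of_general_position S s1 s2 s3 p1 p2 p3 :
  general_position S -> In s1 S -> In s2 S -> In s3 S ->
  is_endpoint s1 p1 -> is_endpoint s2 p2 -> is_endpoint s3 p3 ->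
  p1 <> p2 -> p1 <> p3 -> p2 <> p3 -> cross (vsub p2 p1) (vsub p3 p1) <> 0.
Proof.
  intros [_ Hcol] H1 H2 H3 E1 E2 E3 N12 N13 N23.
  exact (Hcol p1 p2 p3 (ex_intro _ s1 (conj H1 E1)) (ex_intro _ s2 (conj H2 E2))
           (ex_intro _ s3 (conj H3 E3)) N12 N13 N23).
Qed.

Definition side (x u w e : point) : R := sgn (cross (vsub w u) x) * cross (vsub w u) (vsub e u).

Section FarEdgePoint.

Variables (S : list segment) (s1 s2 : segment) (x u w : point) (Phi B d : R).

Hypothesis HB : forall s q, In s S -> on_seg s q -> bounded_by B q.
Hypothesis Hd : forall t1 t2 t3 p1 p2 p3, In t1 S -> In t2 S -> In t3 S ->
  is_endpoint t1 p1 -> is_endpoint t2 p2 -> is_endpoint t3 p3 ->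
  cross (vsub p2 p1) (vsub p3 p1) <> 0 -> d <= Rabs (cross (vsub p2 p1) (vsub p3 p1)).
Hypothesis Hlarge : 2 * (2 * B ^ 2) * B * norm1 x < d * norm2 x.
Hypotheses (Hs1 : In s1 S) (Hs2 : In s2 S) (Hu : is_endpoint s1 u) (Hw : is_endpoint s2 w).
Hypothesis Hux : Phi <= 2 * dot x u <= Phi + 2 * B ^ 2.
Hypothesis Hwx : Phi <= 2 * dot x w <= Phi + 2 * B ^ 2.

Lemma side_gap t e : In t S -> is_endpoint t e -> side x u w e <> 0 -> d <= Rabs (side x u w e).
Proof.
  intros Ht He Hnz. unfold side in *. rewrite Rabs_mult, Rabs_sgn, Rmult_1_l.
  apply (Hd s1 s2 t); auto. intros E. apply Hnz. rewrite E. ring.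
Qed.

Lemma side_estimate t e : In t S -> is_endpoint t e ->
  (2 * dot x e <= Phi + 2 * B ^ 2 -> side x u w e * norm2 x <= 2 * (2 * B ^ 2) * B * norm1 x) /\
  (Phi <= 2 * dot x e -> - (2 * (2 * B ^ 2) * B * norm1 x) <= side x u w e * norm2 x).
Proof.
  intros Ht He.
  apply cross_sign_estimate; [| | | exact Hux | exact Hwx];
    [apply (HB s1) | apply (HB s2) | apply (HB t)]; auto using on_seg_endpoint.
Qed.

Lemma side_nonpos_below_slab t e :
  In t S -> is_endpoint t e -> 2 * dot x e <= Phi + 2 * B ^ 2 -> side x u w e <= 0.
Proof.
  intros Ht He Hbelow.
  apply (nonpos_of_dominated _ (norm2 x) (norm1 x) (2 * (2 * B ^ 2) * B) d);
    [apply norm2_nonneg | exact Hlarge | apply (side_estimate t e); auto | apply (side_gap t e); auto].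
Qed.

Lemma side_pos_above_slab t e :
  In t S -> is_endpoint t e -> Phi <= 2 * dot x e -> side x u w e <> 0 -> 0 < side x u w e.
Proof.
  intros Ht He Habove Hnz.
  enough (- side x u w e <= 0) by lra.
  apply (nonpos_of_dominated _ (norm2 x) (norm1 x) (2 * (2 * B ^ 2) * B) d);
    auto using norm2_nonneg.
  - pose proof (proj2 (side_estimate t e Ht He) Habove). lra.
  - intros _. rewrite Rabs_Ropp. apply (side_gap t e); auto.
Qed.

End FarEdgePoint.

Lemma supporting_halfplane_of_unbounded_edge S H s1 s2 :
  pairwise_disjoint S -> general_position S -> incl H S ->
  In s1 S -> ~ In s1 H -> In s2 S -> ~ In s2 H -> s1 <> s2 ->
  unbounded_voronoi_edge S H s1 s2 -> exists a b c, supporting_halfplane S H s1 s2 a b c.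
Proof.
  intros Hdis Hgp Hinc Hs1 Hn1 Hs2 Hn2 Hne Hub.
  destruct (segments_bounded S) as [B [_ HB]].
  destruct (cross_lower_bound S) as [d [Hd Hdm]].
  destruct (norm2_dominates_norm1 d (2 * (2 * B ^ 2) * B) Hd) as [M HM].
  destruct (Hub M) as [x [[C1 C2] Hx]].
  destruct (edge_point_empty_disk S H s1 s2 x Hs1 Hn1 Hs2 Hn2 Hne C1 C2) as [r [Hr [Hout Hin]]].
  set (Phi := norm2 x - r ^ 2).
  assert (Habove : forall h, In h H \/ h = s1 \/ h = s2 -> exists e, is_endpoint h e /\ Phi <= 2 * dot x e).
  { intros h Hh. destruct (Hin h Hh) as [q [Hq Hqr]]. destruct (seg_dot_max h x q Hq) as [e [He Hqe]].
    exists e. split; auto. pose proof (dot_ge_of_inside_disk x q r Hqr). unfold Phi. lra. }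
  assert (Hbelow : forall t e, In t S -> ~ In t H -> is_endpoint t e -> 2 * dot x e <= Phi + 2 * B ^ 2).
  { intros t e Ht Hnt He. apply dot_le_of_outside_disk; [exact Hr | apply (HB t) | apply (Hout t)];
      auto using on_seg_endpoint. }
  destruct (Habove s1 (or_intror (or_introl eq_refl))) as [u [Hu Hux]].
  destruct (Habove s2 (or_intror (or_intror eq_refl))) as [w [Hw Hwx]].
  assert (Hux' : Phi <= 2 * dot x u <= Phi + 2 * B ^ 2) by (split; [|apply (Hbelow s1)]; auto).
  assert (Hwx' : Phi <= 2 * dot x w <= Phi + 2 * B ^ 2) by (split; [|apply (Hbelow s2)]; auto).
  pose proof (side_pos_above_slab S s1 s2 x u w Phi B d HB Hdm (HM x Hx) Hs1 Hs2 Hu Hw Hux' Hwx')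
    as Hpos.
  pose proof (side_nonpos_below_slab S s1 s2 x u w Phi B d HB Hdm (HM x Hx) Hs1 Hs2 Hu Hw Hux' Hwx')
    as Hnonpos.
  unfold side in Hpos, Hnonpos.
  assert (Huw : u <> w) by (apply (endpoints_neq_of_disjoint S s1 s2); auto).
  apply (supporting_halfplane_of_signs S H s1 s2 u w (sgn (cross (vsub w u) x)));
    [exact Hu | exact Hw | exact Huw | apply sgn_neq0 | |].
  2: { intros t e Ht Hnt He. apply (Hnonpos t); auto. apply (Hbelow t); auto. }
  intros h Hh. destruct (Habove h (or_introl Hh)) as [e [He Hex]]. exists e. split; auto.
  assert (HhS : In h S) by auto.
  assert (Hh1 : h <> s1) by (intros ->; auto). assert (Hh2 : h <> s2) by (intros ->; auto).
  apply (Hpos h); auto. apply Rmult_integral_contrapositive. split; [apply sgn_neq0|].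
  apply (cross_neq0_of_general_position S s1 s2 h); auto; apply not_eq_sym;
    [apply (endpoints_neq_of_disjoint S h s1) | apply (endpoints_neq_of_disjoint S h s2)]; auto.
Qed.

Lemma cross_eq0_of_orthogonal n p q : 0 < norm2 n -> dot n p = 0 -> dot n q = 0 -> cross p q = 0.
Proof.
  intros Hn Hp Hq. pose proof (cross_mul_norm2 p q n) as E.
  replace (dot p n) with (dot n p) in E by (unfold_vec; ring).
  rewrite Hp, Hq in E. apply (Rmult_eq_reg_r (norm2 n)); lra.
Qed.

Lemma norm2_gt_of_dot n z L g D :
  0 < norm2 n -> 0 < g -> 0 <= L -> D <= 2 * L * g -> L * norm2 n + g <= dot n z ->
  L ^ 2 * norm2 n + D < norm2 z.
Proof.
  intros Hn Hg HL HD Hdot. apply (Rmult_lt_reg_l (norm2 n)); auto.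
  rewrite lagrange_identity. pose proof (pow2_ge_0 (cross n z)).
  assert ((L * norm2 n + g) ^ 2 <= dot n z ^ 2) by (apply pow_incr; nra).
  assert (norm2 n * D <= norm2 n * (2 * L * g)) by (apply Rmult_le_compat_l; lra).
  nra.
Qed.

Lemma norm2_lt_of_dot n z L g :
  0 < norm2 n -> cross n z ^ 2 + g ^ 2 < 2 * L * norm2 n * g -> dot n z = L * norm2 n - g ->
  norm2 z < L ^ 2 * norm2 n.
Proof.
  intros Hn Hsmall Hdot. apply (Rmult_lt_reg_l (norm2 n)); auto.
  rewrite lagrange_identity, Hdot. nra.
Qed.

Lemma segment_gap t n c :
  (forall e, is_endpoint t e -> dot n e < c) -> exists g, 0 < g /\ forall q, on_seg t q -> dot n q <= c - g.
Proof.
  intros He. pose proof (He (sa t) (or_introl eq_refl)). pose proof (He (sb t) (or_intror eq_refl)).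
  exists (Rmin (c - dot n (sa t)) (c - dot n (sb t))). split; [apply Rmin_pos; lra|].
  intros q Hq. apply (seg_dot_le t); auto.
  - pose proof (Rmin_l (c - dot n (sa t)) (c - dot n (sb t))). lra.
  - pose proof (Rmin_r (c - dot n (sa t)) (c - dot n (sb t))). lra.
Qed.

Lemma eventually_dist_endpoint s e n v c :
  is_endpoint s e -> dot n e = c -> (forall o, is_endpoint s o -> o = e \/ dot n o < c) ->
  eventually (fun L => forall j, Rabs j <= 1 ->
    Defs.dist (vadd e (vadd (vscale L n) (vscale j v))) s =
    eucl (vadd e (vadd (vscale L n) (vscale j v))) e).
Proof.
  intros He Hc Hbelow.
  assert (Hobtuse : forall o, is_endpoint s o -> eventually (fun L => forall j, Rabs j <= 1 ->
            dot (vsub (vadd e (vadd (vscale L n) (vscale j v))) e) (vsub o e) <= 0)).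
  { intros o Ho.
    assert (E : forall L j, dot (vsub (vadd e (vadd (vscale L n) (vscale j v))) e) (vsub o e)
                            = L * (dot n o - c) + j * dot v (vsub o e))
      by (intros; rewrite <- Hc; unfold_vec; ring).
    destruct (Hbelow o Ho) as [-> | Hlt].
    - exists 0. intros L _ j _. rewrite E. unfold_vec. nra.
    - destruct (eventually_linear_ge (c - dot n o) 0 (Rabs (dot v (vsub o e)))) as [L0 HL0]; [lra|].
      exists L0. intros L HL j Hj. rewrite E. specialize (HL0 L HL).
      pose proof (Rle_abs (j * dot v (vsub o e))). rewrite Rabs_mult in *.
      pose proof (Rabs_pos (dot v (vsub o e))).
      assert (Rabs j * Rabs (dot v (vsub o e)) <= Rabs (dot v (vsub o e)))
        by (rewrite <- (Rmult_1_l (Rabs (dot v (vsub o e)))) at 2; apply Rmult_le_compat_r; lra).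
      nra. }
  destruct (eventually_and _ _ (Hobtuse (sa s) (or_introl eq_refl))
              (Hobtuse (sb s) (or_intror eq_refl))) as [L0 HL0].
  exists L0. intros L HL j Hj. apply dist_eq_endpoint; auto.
  intros o [-> | ->]; apply HL0; auto.
Qed.

Lemma voronoi_region_of_levels S H sA sB y r0 rA rB r :
  r0 <= rA -> rA < rB -> rB <= r ->
  Defs.dist y sA = rA -> Defs.dist y sB = rB ->
  (forall h, In h H -> Defs.dist y h < r0) ->
  (forall t, In t S -> ~ In t H -> t <> sA -> t <> sB -> r < Defs.dist y t) ->
  voronoi_region (add_seg H sA) S y.
Proof.
  intros H0A HAB HBr DA DB Dh Dt s t Hs Ht Hnt. unfold add_seg in *.
  assert (rA < Defs.dist y t).
  { destruct (classic (t = sB)) as [-> | HtB]; [lra|].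
    assert (r < Defs.dist y t) by (apply Dt; auto). lra. }
  destruct Hs as [Hs | ->]; [pose proof (Dh s Hs) | ]; lra.
Qed.

Section SupportingLine.

Variables (S H : list segment) (s1 s2 : segment) (n u w : point) (c : R).

Hypotheses (Hdis : pairwise_disjoint S) (Hgp : general_position S).
Hypotheses (Hs1 : In s1 S) (Hn1 : ~ In s1 H) (Hs2 : In s2 S) (Hn2 : ~ In s2 H) (Hne : s1 <> s2).
Hypothesis Hn : 0 < norm2 n.
Hypotheses (Hu : is_endpoint s1 u) (Hw : is_endpoint s2 w) (Hlu : dot n u = c) (Hlw : dot n w = c).
Hypothesis Hin : forall h, In h H -> exists q, on_seg h q /\ c < dot n q.
Hypothesis Hout : forall t, In t S -> ~ In t H -> forall q, on_seg t q -> dot n q <= c.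

Let v := vsub w u.

(* For fixed [L], [probe L k] moves parallel to [u w]; [probe L (1/2)] is on their bisector. *)
Definition probe (L k : R) : point := vadd u (vadd (vscale L n) (vscale k v)).

Lemma u_neq_w : u <> w.
Proof. apply (endpoints_neq_of_disjoint S s1 s2); auto. Qed.

Lemma dot_n_v : dot n v = 0.
Proof. unfold v. unfold_vec. lra. Qed.

Lemma norm2_v_pos : 0 < norm2 v.
Proof.
  destruct (Rle_lt_dec (norm2 v) 0) as [Hle | Hpos]; auto. exfalso. apply u_neq_w.
  pose proof (pow2_ge_0 (fst w - fst u)). pose proof (pow2_ge_0 (snd w - snd u)).
  unfold v in Hle; unfold_vec. apply injective_projections; nra.
Qed.

Lemma endpoint_below_line t o :
  In t S -> ~ In t H -> is_endpoint t o -> o <> u -> o <> w -> dot n o < c.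
Proof.
  intros Ht Hnt Ho Hou How.
  destruct (Rle_lt_or_eq_dec _ _ (Hout t Ht Hnt o (on_seg_endpoint _ _ Ho))) as [| Heq]; auto.
  exfalso. apply (cross_neq0_of_general_position S s1 s2 t u w o); auto using u_neq_w.
  apply (cross_eq0_of_orthogonal n); auto; unfold_vec; lra.
Qed.

Lemma norm2_probe_sub_u L k : norm2 (vsub (probe L k) u) = L ^ 2 * norm2 n + k ^ 2 * norm2 v.
Proof.
  assert (E : norm2 (vsub (probe L k) u) = L ^ 2 * norm2 n + k ^ 2 * norm2 v + 2 * L * k * dot n v)
    by (unfold probe; unfold_vec; ring).
  rewrite dot_n_v in E. lra.
Qed.

Lemma probe_from_w L k : probe L k = vadd w (vadd (vscale L n) (vscale (1 - k) (vsub u w))).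
Proof. unfold probe, v. unfold_vec. apply injective_projections; cbn [fst snd]; ring. Qed.

Lemma norm2_probe_sub_w L k : norm2 (vsub (probe L k) w) = L ^ 2 * norm2 n + (1 - k) ^ 2 * norm2 v.
Proof.
  assert (E : norm2 (vsub (probe L k) w) =
              L ^ 2 * norm2 n + (1 - k) ^ 2 * norm2 v - 2 * L * (1 - k) * dot n v)
    by (unfold probe, v; unfold_vec; ring).
  rewrite dot_n_v in E. lra.
Qed.

Lemma eventually_dist_probe_s1 :
  eventually (fun L => forall k, 0 <= k <= 1 ->
    Defs.dist (probe L k) s1 = sqrt (L ^ 2 * norm2 n + k ^ 2 * norm2 v)).
Proof.
  destruct (eventually_dist_endpoint s1 u n v c Hu Hlu) as [L0 HL0].
  { intros o Ho. destruct (classic (o = u)) as [| Hou]; [left; auto | right].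
    apply (endpoint_below_line s1); auto.
    apply (endpoints_neq_of_disjoint S s1 s2); auto. }
  exists L0. intros L HL k Hk. unfold probe. rewrite HL0; [|auto | apply Rabs_le; lra].
  fold (probe L k). rewrite eucl_norm2, norm2_probe_sub_u. reflexivity.
Qed.

Lemma eventually_dist_probe_s2 :
  eventually (fun L => forall k, 0 <= k <= 1 ->
    Defs.dist (probe L k) s2 = sqrt (L ^ 2 * norm2 n + (1 - k) ^ 2 * norm2 v)).
Proof.
  destruct (eventually_dist_endpoint s2 w n (vsub u w) c Hw Hlw) as [L0 HL0].
  { intros o Ho. destruct (classic (o = w)) as [| How]; [left; auto | right].
    apply (endpoint_below_line s2); auto.
    apply (endpoints_neq_of_disjoint S s2 s1); auto. }
  exists L0. intros L HL k Hk. rewrite probe_from_w, HL0; [|auto | apply Rabs_le; lra].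
  rewrite <- probe_from_w, eucl_norm2, norm2_probe_sub_w. reflexivity.
Qed.

Lemma eventually_far_from_probe t :
  In t S -> ~ In t H -> t <> s1 -> t <> s2 ->
  eventually (fun L => forall k, 0 <= k <= 1 ->
    sqrt (L ^ 2 * norm2 n + norm2 v) < Defs.dist (probe L k) t).
Proof.
  intros Ht Hnt Ht1 Ht2.
  destruct (segment_gap t n c) as [g [Hg Hgap]].
  { intros o Ho. apply (endpoint_below_line t); auto;
      [apply (endpoints_neq_of_disjoint S t s1) | apply (endpoints_neq_of_disjoint S t s2)]; auto. }
  destruct (eventually_and _ _ (eventually_linear_ge g 0 (norm2 v / 2) Hg)
              (eventually_linear_ge 1 0 0 ltac:(lra))) as [L0 HL0].
  exists L0. intros L HL k Hk. destruct (HL0 L HL) as [HLg HL1].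
  destruct (dist_attained (probe L k) t) as [q [Hq ->]]. rewrite eucl_norm2.
  apply sqrt_lt_1_alt. split; [pose proof (norm2_nonneg n); pose proof (norm2_nonneg v); nra|].
  apply (norm2_gt_of_dot n _ L g); auto; [lra | lra |].
  pose proof (Hgap q Hq).
  replace (dot n (vsub (probe L k) q)) with (c + L * norm2 n + k * dot n v - dot n q)
    by (rewrite <- Hlu; unfold probe; unfold_vec; ring).
  rewrite dot_n_v. lra.
Qed.

Lemma eventually_near_probe h :
  In h H -> eventually (fun L => forall k, 0 <= k <= 1 -> Defs.dist (probe L k) h < sqrt (L ^ 2 * norm2 n)).
Proof.
  intros Hh. destruct (Hin h Hh) as [q [Hq Hqc]]. set (g := dot n q - c).
  set (alpha := cross n (vsub u q)). set (gamma := cross n v).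
  destruct (eventually_linear_ge (2 * norm2 n * g) 0 (2 * alpha ^ 2 + 2 * gamma ^ 2 + g ^ 2 + 1))
    as [L0 HL0]; [unfold g; nra|].
  exists L0. intros L HL k Hk. specialize (HL0 L HL).
  eapply Rle_lt_trans; [apply (dist_le _ _ q Hq)|]. rewrite eucl_norm2.
  apply sqrt_lt_1_alt. split; [apply norm2_nonneg|].
  apply (norm2_lt_of_dot n _ L g); auto.
  - replace (cross n (vsub (probe L k) q)) with (alpha + k * gamma)
      by (unfold alpha, gamma, probe; unfold_vec; ring).
    assert ((alpha + k * gamma) ^ 2 <= 2 * alpha ^ 2 + 2 * gamma ^ 2).
    { pose proof (pow2_ge_0 (alpha - k * gamma)). pose proof (pow2_ge_0 gamma).
      assert (k ^ 2 <= 1) by nra. nra. }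
    lra.
  - replace (dot n (vsub (probe L k) q)) with (c + L * norm2 n + k * dot n v - dot n q)
      by (rewrite <- Hlu; unfold probe; unfold_vec; ring).
    rewrite dot_n_v. unfold g. lra.
Qed.

Lemma eventually_probe_in_regions :
  eventually (fun L => forall k, 0 <= k <= 1 ->
    (k < 1 / 2 -> voronoi_region (add_seg H s1) S (probe L k)) /\
    (1 / 2 < k -> voronoi_region (add_seg H s2) S (probe L k))).
Proof.
  assert (Hfar : eventually (fun L => forall t, In t S -> ~ In t H -> t <> s1 -> t <> s2 ->
            forall k, 0 <= k <= 1 -> sqrt (L ^ 2 * norm2 n + norm2 v) < Defs.dist (probe L k) t)).
  { apply (eventually_forall_in S (fun t L => ~ In t H -> t <> s1 -> t <> s2 -> forall k, 0 <= k <= 1 ->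
             sqrt (L ^ 2 * norm2 n + norm2 v) < Defs.dist (probe L k) t)).
    intros t Ht. destruct (classic (~ In t H /\ t <> s1 /\ t <> s2)) as [[Hnt [Ht1 Ht2]] | Hno].
    - destruct (eventually_far_from_probe t Ht Hnt Ht1 Ht2) as [L0 HL0].
      exists L0. intros L HL _ _ _. apply HL0, HL.
    - exists 0. intros L _ Hnt Ht1 Ht2. exfalso. apply Hno. auto. }
  assert (Hnear := eventually_forall_in H _ eventually_near_probe).
  destruct (eventually_and _ _ (eventually_and _ _ eventually_dist_probe_s1 eventually_dist_probe_s2)
              (eventually_and _ _ Hfar Hnear)) as [L0 HL0].
  exists L0. intros L HL k Hk. destruct (HL0 L HL) as [[D1 D2] [Dfar Dnear]].
  pose proof (pow2_ge_0 L). pose proof (norm2_nonneg n). pose proof norm2_v_pos.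
  assert (Hlev : forall a b, 0 <= a -> a < b -> b <= 1 ->
            sqrt (L ^ 2 * norm2 n) <= sqrt (L ^ 2 * norm2 n + a * norm2 v) /\
            sqrt (L ^ 2 * norm2 n + a * norm2 v) < sqrt (L ^ 2 * norm2 n + b * norm2 v) /\
            sqrt (L ^ 2 * norm2 n + b * norm2 v) <= sqrt (L ^ 2 * norm2 n + norm2 v)).
  { intros a b Ha Hab Hb. repeat split; [apply sqrt_le_1_alt | apply sqrt_lt_1_alt | apply sqrt_le_1_alt];
      try split; nra. }
  split; intros Hside.
  - destruct (Hlev (k ^ 2) ((1 - k) ^ 2)) as [L1 [L2 L3]]; try nra.
    apply (voronoi_region_of_levels S H s1 s2 _ _ _ _ _ L1 L2 L3); auto.
  - destruct (Hlev ((1 - k) ^ 2) (k ^ 2)) as [L1 [L2 L3]]; try nra.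
    apply (voronoi_region_of_levels S H s2 s1 _ _ _ _ _ L1 L2 L3); auto.
Qed.

Lemma eucl_probe L k k' : eucl (probe L k) (probe L k') = Rabs (k - k') * sqrt (norm2 v).
Proof.
  rewrite eucl_norm2.
  replace (norm2 (vsub (probe L k) (probe L k'))) with (Rsqr (k - k') * norm2 v)
    by (unfold probe, Rsqr; unfold_vec; ring).
  rewrite sqrt_mult_alt, sqrt_Rsqr_abs; [reflexivity | apply Rle_0_sqr].
Qed.

Lemma eventually_probe_on_edge :
  eventually (fun L => Defs.closure (voronoi_region (add_seg H s1) S) (probe L (1 / 2)) /\
                       Defs.closure (voronoi_region (add_seg H s2) S) (probe L (1 / 2))).
Proof.
  destruct eventually_probe_in_regions as [L0 HL0]. exists L0. intros L HL.
  assert (Hclose : forall eps, 0 < eps -> exists delta, 0 < delta <= 1 / 2 /\ delta * sqrt (norm2 v) < eps).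
  { intros eps Heps. pose proof (sqrt_pos (norm2 v)).
    set (delta := Rmin (1 / 2) (eps / (sqrt (norm2 v) + 1))).
    assert (Hd : delta <= eps / (sqrt (norm2 v) + 1)) by apply Rmin_r.
    exists delta. split; [split; [apply Rmin_pos; [lra | apply Rdiv_lt_0_compat; lra] | apply Rmin_l]|].
    apply (Rmult_le_compat_r (sqrt (norm2 v) + 1)) in Hd; [|lra].
    replace (eps / (sqrt (norm2 v) + 1) * (sqrt (norm2 v) + 1)) with eps in Hd by (field; lra).
    assert (0 < delta) by (apply Rmin_pos; [lra | apply Rdiv_lt_0_compat; lra]). nra. }
  split; intros eps Heps; destruct (Hclose eps Heps) as [delta [Hd Hsmall]].
  - exists (probe L (1 / 2 - delta)). split; [apply (HL0 L HL); lra|].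
    rewrite eucl_probe. rewrite Rabs_pos_eq; lra.
  - exists (probe L (1 / 2 + delta)). split; [apply (HL0 L HL); lra|].
    rewrite eucl_probe. rewrite Rabs_left1; lra.
Qed.

Lemma eventually_probe_far M : eventually (fun L => M < eucl (probe L (1 / 2)) (0, 0)).
Proof.
  set (N := norm2 n). assert (HN : 0 < N) by exact Hn.
  destruct (eventually_linear_ge N c ((N + 1) * (Rabs M + 1)) Hn) as [L0 HL0].
  exists L0. intros L HL. specialize (HL0 L HL).
  set (p := probe L (1 / 2)). rewrite eucl_norm2.
  replace (norm2 (vsub p (0, 0))) with (norm2 p) by (unfold_vec; ring).
  assert (Hdot : dot n p = c + L * N)
    by (pose proof dot_n_v; unfold p, probe, N; rewrite <- Hlu; unfold_vec; nra).
  pose proof (lagrange_identity n p) as E. rewrite Hdot in E.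
  pose proof (pow2_ge_0 (cross n p)). pose proof (Rabs_pos M).
  assert (((N + 1) * (Rabs M + 1)) ^ 2 <= (c + L * N) ^ 2) by (apply pow_incr; nra).
  assert (HM : Rabs M ^ 2 < norm2 p).
  { apply (Rmult_lt_reg_l N); [exact HN|]. fold N in E. nra. }
  apply (Rle_lt_trans _ (Rabs M)); [apply Rle_abs|].
  rewrite <- (sqrt_pow2 (Rabs M)) by apply Rabs_pos.
  apply sqrt_lt_1_alt. split; [apply pow2_ge_0 | exact HM].
Qed.

Lemma unbounded_voronoi_edge_of_supporting_line : unbounded_voronoi_edge S H s1 s2.
Proof.
  intros M. destruct (eventually_and _ _ eventually_probe_on_edge (eventually_probe_far M)) as [L0 HL0].
  exists (probe L0 (1 / 2)). apply HL0, Rle_refl.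
Qed.

End SupportingLine.

Theorem corollary1 (S H : list segment) (s1 s2 : segment) :
  pairwise_disjoint S ->
  general_position S ->
  incl H S ->
  In s1 S -> ~ In s1 H ->
  In s2 S -> ~ In s2 H ->
  s1 <> s2 ->
  (unbounded_voronoi_edge S H s1 s2 <->
   exists a b c : R, supporting_halfplane S H s1 s2 a b c).
Proof.
  intros Hdis Hgp Hinc Hs1 Hn1 Hs2 Hn2 Hne. split.
  - apply supporting_halfplane_of_unbounded_edge; auto.
  - intros (a & b & c & Hab & [u [Hu Hlu]] & [w [Hw Hlw]] & Hin & Hout).
    apply (unbounded_voronoi_edge_of_supporting_line S H s1 s2 (a, b) u w c); auto using norm2_pos.
    intros t Ht Hnt q Hq. apply Rnot_gt_le, (Hout t Ht Hnt q Hq).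
Qed.
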